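(* Let $b\ge1$, let $\lambda^{(1)},\dots,\lambda^{(b)}$ be nonempty partitions of total size $n$, and let $k$ be a positive divisor of $n$. If $k$ divides $\gcd(|\lambda^{(1)}|,\dots,|\lambda^{(b)}|)$, then $$\mathrm{SYT}(\lambda^{(1)}\cup\cdots\cup\lambda^{(b)})^{\operatorname{pr}^{n/k}}=\Big\{I_{n/k,M_1}(T_1)\cup\cdots\cup I_{n/k,M_b}(T_b)\ :\ T_j\in\mathrm{SYT}(\lambda^{(j)})^{\operatorname{pr}^{|\lambda^{(j)}|/k}}\ (1\le j\le b),\ (M_1,\dots,M_b)\in\mathcal{P}\Big\},$$ where $\mathcal{P}$ is the set of ordered set partitions $(M_1,\dots,M_b)$ of $[n/k]$ into pairwise disjoint sets with $|M_j|=|\lambda^{(j)}|/k$. Otherwise, $\mathrm{SYT}(\lambda^{(1)}\cup\cdots\cup\lambda^{(b)})^{\operatorname{pr}^{n/k}}=\varnothing$.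
   Context: Tableaux in English notation. $\lambda^{(1)}\cup\cdots\cup\lambda^{(b)}$ is the skew shape formed by placing translates of the Young diagrams $\lambda^{(1)},\dots,\lambda^{(b)}$ block anti-diagonally, with $\lambda^{(j+1)}$ entirely strictly above and strictly to the right of $\lambda^{(j)}$ (no shared rows or columns); for fillings $U_j$ of the pieces, $U_1\cup\cdots\cup U_b$ denotes the corresponding filling of this skew shape. $\mathrm{SYT}(\cdot)$ is the set of standard tableaux of a shape; for a map $g$, $W^g$ is its fixed point set. Promotion $\operatorname{pr}$ on a standard (skew) tableau with $n$ cells: erase $1$, slide the empty cell by jeu de taquin (repeatedly move into it the smaller of its right and lower neighbours in the shape) until it reaches an outer corner of the shape, fill that corner with $n+1$, subtract $1$ from all entries. For a standard tableau $T$ of size $N$, a positive integer $m$, and $A=\{a_1<\cdots<a_q\}\subseteq[m]$ with $q\mid N$, $I_{m,A}(T)$ is obtained from $T$ by replacing each entry $iq+j$ (with $0\le i<N/q$, $1\le j\le q$) by $im+a_j$. *)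

From mathcomp Require Import all_boot.
Set Implicit Arguments. Unset Strict Implicit. Unset Printing Implicit Defensive.

(* A cell (row, column) in English notation: rows grow downward, columns to
   the right, both indexed from 0. *)
Definition cell := (nat * nat)%type.

(* A filling: value at each cell; a tableau of shape sh is a filling that is
   0 outside sh. *)
Definition tableau := cell -> nat.

Definition is_partition (la : seq nat) : bool :=
  sorted geq la && all (fun x => 0 < x) la.

Definition ydiag (la : seq nat) : seq cell :=
  flatten [seq [seq (i, j) | j <- iota 0 (nth 0 la i)] | i <- iota 0 (size la)].

(* Skew shape la^(1) u ... u la^(b) (las = [:: la^(1); ...; la^(b)], indexed
   from 0): piece j+1 strictly above and strictly right of piece j. *)
Definition row_off (las : seq (seq nat)) (j : nat) : nat :=
  sumn [seq size (nth [::] las i) | i <- iota j.+1 (size las - j.+1)].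
Definition col_off (las : seq (seq nat)) (j : nat) : nat :=
  sumn [seq head 0 (nth [::] las i) | i <- iota 0 j].
Definition piece (las : seq (seq nat)) (j : nat) : seq cell :=
  [seq (c.1 + row_off las j, c.2 + col_off las j) | c <- ydiag (nth [::] las j)].
Definition skew_union (las : seq (seq nat)) : seq cell :=
  flatten [seq piece las j | j <- iota 0 (size las)].

(* The filling U_1 u ... u U_b of the skew shape (Us j fills piece j,
   in the coordinates of the Young diagram of la^(j)). *)
Definition union_tab (las : seq (seq nat)) (Us : nat -> tableau) : tableau :=
  fun c => foldr (fun j acc =>
    if c \in piece las j then Us j (c.1 - row_off las j, c.2 - col_off las j)
    else acc) 0 (iota 0 (size las)).

Definition SYT (sh : seq cell) (T : tableau) : Prop :=
  [/\ forall c, c \notin sh -> T c = 0,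
      perm_eq [seq T c | c <- sh] (iota 1 (size sh)),
      forall c c', c \in sh -> c' \in sh -> c.1 = c'.1 -> c.2 < c'.2 -> T c < T c'
    & forall c c', c \in sh -> c' \in sh -> c.2 = c'.2 -> c.1 < c'.1 -> T c < T c'].

Definition upd (T : tableau) (e : cell) (v : nat) : tableau :=
  fun c => if c == e then v else T c.

(* Jeu de taquin slide of the empty cell e (fuel bounds the number of moves). *)
Fixpoint jdt (sh : seq cell) (T : tableau) (e : cell) (fuel : nat) : tableau * cell :=
  match fuel with
  | 0 => (T, e)
  | fuel'.+1 =>
      let r := (e.1, e.2.+1) in
      let d := (e.1.+1, e.2) in
      if (r \in sh) && ((d \notin sh) || (T r < T d)) then jdt sh (upd T e (T r)) r fuel'
      else if d \in sh then jdt sh (upd T e (T d)) d fuel'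
      else (T, e)
  end.

(* Promotion: erase 1, slide the hole to an outer corner, put n+1 there,
   subtract 1 from every entry. Output is 0 outside sh. *)
Definition promotion (sh : seq cell) (T : tableau) : tableau :=
  let c1 := nth (0, 0) sh (find (fun c => T c == 1) sh) in
  let (T', e) := jdt sh T c1 (size sh) in
  fun c => if c \in sh then (if c == e then size sh else T' c - 1) else 0.

Definition fixed_SYT (sh : seq cell) (d : nat) (T : tableau) : Prop :=
  SYT sh T /\ iter d (promotion sh) T = T.

(* I_{m,A}: A = [:: a_1; ...; a_q] (strictly increasing), entry i*q + j
   (1 <= j <= q) is replaced by i*m + a_j; 0 (outside the shape) stays 0. *)
Definition I_map (m : nat) (A : seq nat) (T : tableau) : tableau :=
  fun c => let v := T c in
    if v == 0 then 0
    else ((v.-1) %/ size A) * m + nth 0 A ((v.-1) %% size A).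

(* Ordered set partitions (M_1, ..., M_b) of [N] = {1..N} with prescribed
   block sizes; each block is given as its strictly increasing list. *)
Definition ordered_set_partition (N b : nat) (sizes : nat -> nat)
    (Ms : nat -> seq nat) : Prop :=
  (forall j, j < b -> sorted ltn (Ms j) /\ size (Ms j) = sizes j) /\
  perm_eq (flatten [seq Ms j | j <- iota 0 b]) (iota 1 N).

(* A standard filling T of sh is encoded by a word w in [0, b)^n, where w_v
   is the piece containing the entry v, together with standard fillings S j
   of the pieces, S j giving the relative order of the entries of piece j
   (record [encodes]).  Pieces share no row or column, so T is a standard
   tableau iff every S j is one, and a slide in sh never leaves the piece
   where it starts.  Hence one promotion rotates w by one letter and promotes
   S (w_1) once, so pr^m rotates w by m letters and promotes S j once per
   occurrence of j among w_1 .. w_m ([encodes_iter_promotion]).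

   For n = k m, T is thus fixed by pr^m iff w = u^k with |u| = m and each S j
   is fixed by pr^(|la^(j)| / k).  The positions of the letters j in u form an
   ordered set partition (M_1, ..., M_b) of [m], and the entries of T are then
   exactly I_{m, M_j}(S j) ([encodes_union_I_map]).  This forces k to divide
   every |la^(j)|, and conversely every such union is fixed by pr^m. *)

From mathcomp Require Import all_boot.
From mathcomp Require Import zify.
From Stdlib Require Import FunctionalExtensionality.
Set Implicit Arguments. Unset Strict Implicit. Unset Printing Implicit Defensive.

Lemma mem_ydiag la c : (c \in ydiag la) = (c.1 < size la) && (c.2 < nth 0 la c.1).
Proof.
apply/flatten_mapP/andP => [[i] | [Hrow Hcol]].
  rewrite mem_iota => /andP[_ Hi] /mapP [j]; rewrite mem_iota => /andP[_ Hj] ->.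
  by rewrite /= Hi.
exists c.1; first by rewrite mem_iota.
by apply/mapP; exists c.2; [rewrite mem_iota | case: c {Hrow Hcol}].
Qed.

Lemma uniq_rows_cells (g : nat -> nat) s a :
  uniq (flatten [seq [seq ((i, j) : cell) | j <- iota 0 (g i)] | i <- iota a s]).
Proof.
elim: s a => [|s IH] a //=.
rewrite cat_uniq IH andbT map_inj_uniq ?iota_uniq; last by move=> x y [].
apply/hasPn => x /flatten_mapP [i]; rewrite mem_iota => /andP [Hi _] /mapP [j _ ->].
by apply/negP => /mapP [j' _ [Ei _]]; rewrite Ei ltnn in Hi.
Qed.

Lemma uniq_ydiag la : uniq (ydiag la).
Proof. exact: uniq_rows_cells. Qed.

Lemma size_ydiag la : size (ydiag la) = sumn la.
Proof.
rewrite /ydiag size_flatten /shape -map_comp.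
rewrite (eq_map (g := nth 0 la)); last by move=> i /=; rewrite size_map size_iota.
by rewrite -/(mkseq _ _) mkseq_nth.
Qed.

Lemma part_nth_head la i : is_partition la -> i < size la -> nth 0 la i <= head 0 la.
Proof.
case/andP=> Hsorted _ Hi; rewrite -nth0.
apply: (sorted_leq_nth (leT := geq)) => //.
- by move=> x y z /= Hyx Hzy; apply: leq_trans Hzy Hyx.
- exact: leqnn.
- by rewrite inE (leq_ltn_trans _ Hi).
Qed.

Lemma part_hook la : is_partition la -> la != [::] -> size la + head 0 la <= (sumn la).+1.
Proof.
case/andP=> _; case: la => // x s /= /andP[_ Hpos] _.
rewrite addSn ltnS addnC leq_add2l.
elim: s Hpos => //= y s IH /andP[Hy Hs]; rewrite -add1n; exact: leq_add Hy (IH Hs).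
Qed.

(* Along a jeu de taquin path the diagonal index c.1 + c.2 increases, and it
   is bounded by |la| on the diagram: this bounds the length of slides. *)
Lemma ydiag_diag_bound la c : is_partition la -> la != [::] -> c \in ydiag la ->
  c.1 + c.2 < sumn la.
Proof.
move=> Hp Hne; rewrite mem_ydiag => /andP [H1 H2].
have := part_nth_head Hp H1; have := part_hook Hp Hne; lia.
Qed.

(** * Ranks of occurrences in a word *)

Lemma count_take_mono (A : Type) (P : pred A) w i i' : i <= i' ->
  count P (take i w) <= count P (take i' w).
Proof.
by move=> Hii'; rewrite -(cat_take_drop i (take i' w)) count_cat take_takel ?leq_addr.
Qed.

Section OccurrenceRank.
Variables (A : eqType) (d : A).
Implicit Types (w : seq A) (j : A).

(* [occ_rank w j v t]: the letter at (1-based) position v of w is j, and it is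
   the t-th occurrence of j in w.  The default letter d never occurs. *)
Definition occ_rank w j (v t : nat) : Prop :=
  [/\ 0 < v, nth d w v.-1 = j & count (pred1 j) (take v w) = t].

Lemma occ_rank_size w j v t : j != d -> occ_rank w j v t -> v <= size w.
Proof.
move=> Hj [_ Hn _]; case: (leqP v (size w)) => // Hv.
by rewrite nth_default in Hn; [rewrite Hn eqxx in Hj | lia].
Qed.

Lemma occ_rank_lt w j v t v' t' : j != d -> occ_rank w j v t -> occ_rank w j v' t' ->
  (v < v') = (t < t').
Proof.
move=> Hj R R'; have Hs' := occ_rank_size Hj R'; case: R R' => [Hv Hn <-] [Hv' Hn' <-].
case: (ltnP v v') => Hvv'; last by rewrite ltnNge count_take_mono.
apply/esym; rewrite -(prednK Hv') (take_nth d) ?prednK // -cats1 count_cat /= Hn' eqxx.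
by rewrite addn1 ltnS count_take_mono // -ltnS prednK.
Qed.

Lemma occ_rank_inj w j v t v' t' : j != d -> occ_rank w j v t -> occ_rank w j v' t' ->
  (v == v') = (t == t').
Proof.
move=> Hj R R'; rewrite !eqn_leq (leqNgt v) (leqNgt v') (leqNgt t) (leqNgt t').
by rewrite (occ_rank_lt Hj R R') (occ_rank_lt Hj R' R).
Qed.

Lemma occ_rank_bounds w j v t : j != d -> occ_rank w j v t -> 0 < t <= count (pred1 j) w.
Proof.
move=> Hj R; have Hs := occ_rank_size Hj R; case: R => Hv Hn <-; apply/andP; split.
  by rewrite -(prednK Hv) (take_nth d) ?prednK // -cats1 count_cat /= Hn eqxx addn1.
by rewrite -[X in _ <= count _ X](cat_take_drop v w) count_cat leq_addr.
Qed.

Lemma occ_rank_rot_other w j v t : j != d -> j != nth d w 0 -> occ_rank w j v t ->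
  occ_rank (rot 1 w) j v.-1 t.
Proof.
move=> Hj Hj0 R; have Hs := occ_rank_size Hj R; case: R => Hv Hn Hc.
case: w Hj0 Hs Hn Hc => [|x w] /= Hj0 Hs Hn Hc; first by case: v Hv Hs {Hn Hc}.
move: Hv Hs Hn Hc; case: v => [|[|v]] // _ /= Hs Hn Hc; first by rewrite Hn eqxx in Hj0.
rewrite rot1_cons; split => //; first by rewrite nth_rcons -ltnS Hs.
by rewrite -cats1 takel_cat // -Hc /= eq_sym (negbTE Hj0).
Qed.

Lemma occ_rank_rot_head w j v t : j != d -> j = nth d w 0 -> occ_rank w j v t -> 1 < t ->
  occ_rank (rot 1 w) j v.-1 t.-1.
Proof.
move=> Hj Hj0 R Ht; have Hs := occ_rank_size Hj R; case: R => Hv Hn Hc.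
case: w Hj0 Hs Hn Hc => [|x w] /= Hj0 Hs Hn Hc; first by case: v Hv Hs {Hn Hc}.
subst x; move: Hv Hs Hn Hc; case: v => [|[|v]] // _ /= Hs Hn Hc.
  by rewrite -Hc take0 /= eqxx in Ht.
rewrite rot1_cons; split => //; first by rewrite nth_rcons -ltnS Hs.
by rewrite -cats1 takel_cat // -Hc /= eqxx.
Qed.

Lemma occ_rank_rot_last w j : j != d -> j = nth d w 0 ->
  occ_rank (rot 1 w) j (size w) (count (pred1 j) w).
Proof.
move=> Hj Hj0; case: w Hj0 => [|x w] /= Hj0; first by rewrite Hj0 eqxx in Hj.
rewrite rot1_cons; split => //; first by rewrite nth_rcons ltnn eqxx.
by rewrite take_oversize ?size_rcons // -cats1 count_cat /= addn0 addnC Hj0.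
Qed.

End OccurrenceRank.

(** * Jeu de taquin transported along an embedding of shapes *)

Section SlideTransport.
Variables (Y sh : seq cell) (f : cell -> cell).
Hypothesis f_inj : injective f.
Hypothesis f_right : forall c, f (c.1, c.2.+1) = ((f c).1, (f c).2.+1).
Hypothesis f_down : forall c, f (c.1.+1, c.2) = ((f c).1.+1, (f c).2).
Hypothesis sh_right : forall c, c \in Y ->
  (f (c.1, c.2.+1) \in sh) = ((c.1, c.2.+1) \in Y).
Hypothesis sh_down : forall c, c \in Y ->
  (f (c.1.+1, c.2) \in sh) = ((c.1.+1, c.2) \in Y).
Variable rk : nat -> nat -> Prop.
Hypothesis rk_lt : forall v t v' t', rk v t -> rk v' t' -> (v < v') = (t < t').

Lemma upd_related T S e r : r \in Y -> (forall c, c \in Y -> rk (T (f c)) (S c)) ->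
  forall c, c \in Y -> rk (upd T (f e) (T (f r)) (f c)) (upd S e (S r) c).
Proof. by move=> Hr HT c Hc; rewrite /upd (inj_eq f_inj); case: eqP => _; apply: HT. Qed.

Lemma jdt_transport fuel T S e : e \in Y -> (forall c, c \in Y -> rk (T (f c)) (S c)) ->
  [/\ (jdt sh T (f e) fuel).2 = f (jdt Y S e fuel).2,
      forall c, c \in Y -> rk ((jdt sh T (f e) fuel).1 (f c)) ((jdt Y S e fuel).1 c) &
      forall x, (forall c, c \in Y -> x != f c) -> (jdt sh T (f e) fuel).1 x = T x].
Proof.
elim: fuel T S e => [|fuel IH] T S e He HT; first by split.
have upd_out v x : (forall c, c \in Y -> x != f c) -> upd T (f e) v x = T x.
  by move=> Hx; rewrite /upd (negbTE (Hx e He)).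
have slide_to r : r \in Y ->
  [/\ (jdt sh (upd T (f e) (T (f r))) (f r) fuel).2 = f (jdt Y (upd S e (S r)) r fuel).2,
      forall c, c \in Y -> rk ((jdt sh (upd T (f e) (T (f r))) (f r) fuel).1 (f c))
                             ((jdt Y (upd S e (S r)) r fuel).1 c) &
      forall x, (forall c, c \in Y -> x != f c) ->
        (jdt sh (upd T (f e) (T (f r))) (f r) fuel).1 x = T x].
  move=> Hr; have [E1 E2 E3] := IH _ _ _ Hr (@upd_related _ _ e _ Hr HT).
  by split => // x Hx; rewrite E3 // upd_out.
rewrite /= -f_right -f_down (sh_right He) (sh_down He).
case Hr: ((e.1, e.2.+1) \in Y); case Hd: ((e.1.+1, e.2) \in Y) => /=.
- by rewrite (rk_lt (HT _ Hr) (HT _ Hd)); case: ifP => _; apply: slide_to.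
- exact: slide_to.
- exact: slide_to.
- by split.
Qed.

End SlideTransport.

Section SingleShape.
Variable Y : seq cell.

(* During a slide in Y the filling stays injective off the hole h and takes
   values in (1, q] there (the entry 1 has been erased). *)
Definition hole_filling (S : tableau) (h : cell) (q : nat) : Prop :=
  {in [predD Y & pred1 h] &, injective S} /\
  (forall c, c \in Y -> c != h -> 1 < S c <= q).

Lemma jdt_hole_filling fuel S e q : e \in Y -> hole_filling S e q ->
  (jdt Y S e fuel).2 \in Y /\ hole_filling (jdt Y S e fuel).1 (jdt Y S e fuel).2 q.
Proof.
elim: fuel S e => [|fuel IH] S e He [Sinj Srange] //=.
have move_hole r : r \in Y -> r != e -> hole_filling (upd S e (S r)) r q.
  move=> Hr Hre; split => [c c' | c Hc Hcr]; last first.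
    by rewrite /upd; case: eqP => [_ | /eqP Hce]; apply: Srange.
  rewrite !inE /upd => /andP [Hcr Hc] /andP [Hc'r Hc'].
  have Hin x : x \in Y -> x != e -> x \in [predD Y & pred1 e] by rewrite !inE => -> ->.
  have Hr' : r \in [predD Y & pred1 e] by apply: Hin.
  case: (eqVneq c e) => [-> | Hce]; case: (eqVneq c' e) => [-> | Hc'e] // E.
  - by rewrite (Sinj _ _ Hr' (Hin _ Hc' Hc'e) E) eqxx in Hc'r.
  - by rewrite (Sinj _ _ Hr' (Hin _ Hc Hce) (esym E)) eqxx in Hcr.
  - exact: Sinj (Hin _ Hc Hce) (Hin _ Hc' Hc'e) E.
have Hre : (e.1, e.2.+1) != e by apply/eqP => /(f_equal snd) /= /esym /n_Sn.
have Hde : (e.1.+1, e.2) != e by apply/eqP => /(f_equal fst) /= /esym /n_Sn.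
case Hr: ((e.1, e.2.+1) \in Y); case Hd: ((e.1.+1, e.2) \in Y) => /=.
- by case: (_ < _); apply: IH => //; apply: move_hole.
- by apply: IH => //; apply: move_hole.
- by apply: IH => //; apply: move_hole.
- by [].
Qed.

(* A slide moves the hole one step further from the corner (0, 0), so any
   fuel beyond the diameter K of Y gives the same result. *)
Lemma jdt_enough_fuel K : (forall c, c \in Y -> c.1 + c.2 < K) -> forall fuel fuel' S e,
  e \in Y -> K <= e.1 + e.2 + fuel -> K <= e.1 + e.2 + fuel' ->
  jdt Y S e fuel = jdt Y S e fuel'.
Proof.
move=> HK; elim=> [|fuel IH] fuel' S [x y] He /= H1 H2; have /= := HK _ He; first lia.
case: fuel' H2 => [|fuel'] /= H2 Hxy; first lia.
case Hr: ((x, y.+1) \in Y); case Hd: ((x.+1, y) \in Y) => //=.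
- by case: (_ < _); apply: IH => //=; lia.
- by apply: IH => //=; lia.
- by apply: IH => //=; lia.
Qed.

End SingleShape.

Lemma uniq_map_inj (A B : eqType) (g : A -> B) s : uniq (map g s) -> {in s &, injective g}.
Proof.
elim: s => //= a s IH /andP [Ha Hu] x y.
rewrite !inE => /orP [/eqP -> | Hx] /orP [/eqP -> | Hy] // E.
- by rewrite E (map_f g Hy) in Ha.
- by rewrite -E (map_f g Hx) in Ha.
- exact: IH.
Qed.

Lemma perm_iota_uniq (s : seq nat) q : uniq s -> {subset s <= iota 1 q} -> size s = q ->
  perm_eq s (iota 1 q).
Proof.
move=> Hu Hsub Hs; have [_ Hm] := uniq_min_size Hu Hsub (eq_leq (etrans (size_iota 1 q) (esym Hs))).
exact: uniq_perm Hu (iota_uniq 1 q) Hm.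
Qed.

Section StandardFilling.
Variable Y : seq cell.
Hypothesis Y_uniq : uniq Y.
Local Notation q := (size Y).

Definition std_filling (S : tableau) : Prop :=
  perm_eq (map S Y) (iota 1 q) /\ (forall c, c \notin Y -> S c = 0).

Lemma SYT_std_filling S : SYT Y S -> std_filling S.
Proof. by case. Qed.

Lemma std_filling_inj S : std_filling S -> {in Y &, injective S}.
Proof. by case=> H _; apply: uniq_map_inj; rewrite (perm_uniq H) iota_uniq. Qed.

Lemma std_filling_range S c : std_filling S -> c \in Y -> 0 < S c <= q.
Proof.
case=> H _ Hc; have : S c \in iota 1 q by rewrite -(perm_mem H) map_f.
by rewrite mem_iota add1n ltnS.
Qed.

Definition cell_of_one (S : tableau) : cell := nth (0, 0) Y (find (fun c => S c == 1) Y).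

Lemma cell_of_one_spec S : std_filling S -> 0 < q ->
  [/\ cell_of_one S \in Y, S (cell_of_one S) = 1 & hole_filling Y S (cell_of_one S) q].
Proof.
move=> HS Hq; have Sinj := std_filling_inj HS.
have Hhas : has (fun c => S c == 1) Y.
  have : 1 \in map S Y by rewrite (perm_mem HS.1) mem_iota leqnn add1n.
  by case/mapP => c Hc E; apply/hasP; exists c => //; rewrite -E.
have Hin : cell_of_one S \in Y by rewrite /cell_of_one mem_nth // -has_find.
have H1 : S (cell_of_one S) = 1 by apply/eqP; apply: (nth_find _ Hhas).
split => //; split => [c c' /andP [_ Hc] /andP [_ Hc'] | c Hc Hne]; first exact: Sinj.
have /andP [Hpos ->] := std_filling_range HS Hc; rewrite andbT.
case: (S c) Hpos (Sinj _ _ Hc Hin) => [|[|x]] //= _ Hi.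
by rewrite -H1 in Hi; rewrite (Hi erefl) eqxx in Hne.
Qed.

(* Promotion maps standard fillings to standard fillings: after the slide the
   entries 2..q sit injectively off the final hole, which receives q. *)
Lemma promotion_std_filling S : std_filling S -> 0 < q -> std_filling (promotion Y S).
Proof.
move=> HS Hq; have [Hin _ HI] := cell_of_one_spec HS Hq.
rewrite /promotion -/(cell_of_one S).
have [He [Sinj Srange]] := jdt_hole_filling q Hin HI.
case: (jdt Y S (cell_of_one S) q) He Sinj Srange => S' e /= He Sinj Srange.
split; last by move=> c /negbTE ->.
have Hin' x : x \in Y -> x != e -> x \in [predD Y & pred1 e] by rewrite !inE => -> ->.
apply: perm_iota_uniq; last by rewrite size_map.
- rewrite map_inj_in_uniq // => c c' Hc Hc'; rewrite Hc Hc'.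
  case: (eqVneq c e) => [-> | Hce]; case: (eqVneq c' e) => [-> | Hc'e] //.
  + by have := Srange _ Hc' Hc'e; lia.
  + by have := Srange _ Hc Hce; lia.
  + have := Srange _ Hc Hce; have := Srange _ Hc' Hc'e => R' R E.
    by apply: Sinj; [apply: Hin' | apply: Hin' | lia].
- move=> x /mapP [c Hc ->]; rewrite Hc mem_iota.
  case: (eqVneq c e) => [_ | Hce]; first lia.
  by have := Srange _ Hc Hce; lia.
Qed.

End StandardFilling.

(** * Periodic words *)

Section PeriodicWords.
Variable A : Type.
Implicit Types (u v w : seq A).

Lemma size_flatten_nseq k u : size (flatten (nseq k u)) = k * size u.
Proof. by elim: k => //= k IH; rewrite size_cat IH mulSn. Qed.

Lemma all_flatten_nseq (P : pred A) k u : all P u -> all P (flatten (nseq k u)).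
Proof. by move=> Hu; elim: k => //= k IH; rewrite all_cat Hu. Qed.

Lemma count_flatten_nseq (P : pred A) k u : count P (flatten (nseq k u)) = k * count P u.
Proof. by elim: k => //= k IH; rewrite count_cat IH mulSn. Qed.

Lemma take_flatten_nseq k u : 0 < k -> take (size u) (flatten (nseq k u)) = u.
Proof. by case: k => //= k _; rewrite take_size_cat. Qed.

Lemma nth_flatten_nseq d k u p r : r < size u -> p < k ->
  nth d (flatten (nseq k u)) (p * size u + r) = nth d u r.
Proof.
move=> Hr; elim: p k => [|p IH] [|k] //= Hpk; first by rewrite nth_cat Hr.
by rewrite nth_cat mulSn ltnNge -addnA leq_addr /= addKn IH.
Qed.

Lemma count_take_flatten_nseq (P : pred A) k u p a : a <= size u -> p < k ->
  count P (take (p * size u + a) (flatten (nseq k u))) = p * count P u + count P (take a u).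
Proof.
move=> Ha; elim: p k => [|p IH] [|k] //= Hpk; first by rewrite takel_cat.
by rewrite take_cat mulSn ltnNge -addnA leq_addr /= addKn count_cat IH // mulSn addnA.
Qed.

Lemma rot_flatten_nseq k u : rot (size u) (flatten (nseq k u)) = flatten (nseq k u).
Proof.
case: k => [|k] /=; first by rewrite rot_oversize.
rewrite rot_size_cat; elim: k => [|k IH] /=; first by rewrite cats0.
by rewrite -catA -IH.
Qed.

Lemma catl_inj u v v' : u ++ v = u ++ v' -> v = v'.
Proof. by elim: u => //= x u IH [] /IH. Qed.

Lemma rot_periodic m k w : size w = k * m -> rot m w = w -> w = flatten (nseq k (take m w)).
Proof.
elim: k w => [|k IH] w Hs Hr; first by move: Hs Hr; case: w.
set u := take m w; set v := drop m w.
have Hw : w = u ++ v by rewrite cat_take_drop.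
have Hsu : size u = m by rewrite size_take Hs mulSn; case: ltnP => //; lia.
have Hsv : size v = k * m by rewrite size_drop Hs mulSn addKn.
have Hvu : v ++ u = u ++ v by rewrite -Hw; exact: Hr.
case: (posnP k) => [Hk | Hk].
  subst k; move: Hsv; rewrite mul0n => /size0nil Hv.
  by rewrite /= cats0 {1}Hw Hv cats0.
have Htv : take m v = u.
  by have := congr1 (take m) Hvu; rewrite takel_cat ?Hsv ?leq_pmull // take_size_cat.
have Hrv : rot m v = v by rewrite /rot Htv; apply: (@catl_inj u); rewrite catA -{1}Htv cat_take_drop.
by rewrite {1}Hw {1}(IH v Hsv Hrv) Htv.
Qed.

End PeriodicWords.

Lemma dvdn_biggcd_seq (A : Type) (F : A -> nat) (s : seq A) k :
  (k %| \big[gcdn/0]_(x <- s) F x) = all (fun x => k %| F x) s.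
Proof. by elim: s => [|x s IH]; rewrite ?big_nil ?dvdn0 // big_cons dvdn_gcd IH. Qed.

Lemma count_mem_sub (A : eqType) (M s : seq A) : uniq M -> {subset M <= s} -> uniq s ->
  count (mem M) s = size M.
Proof.
move=> HuM Hsub Hus; rewrite -size_filter; apply: perm_size.
apply: uniq_perm => //; first exact: filter_uniq.
by move=> x; rewrite mem_filter /=; case: (boolP (x \in M)) => // /Hsub ->.
Qed.

Lemma find_iota_unique (P : pred nat) b j : j < b -> P j ->
  (forall i, i < b -> P i -> i = j) -> find P (iota 0 b) = j.
Proof.
move=> Hj HPj Huniq; have Hs : j < size (iota 0 b) by rewrite size_iota.
have Hhas : has P (iota 0 b) by apply/hasP; exists j; rewrite ?mem_iota.
have Hf : find P (iota 0 b) < b by rewrite -{2}(size_iota 0 b) -has_find.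
by apply: Huniq => //; rewrite -[X in P X]add0n -(@nth_iota 0 0 b) //; apply: nth_find.
Qed.

Lemma count_take_positions (A : eqType) (d : A) (u : seq A) j a : a <= size u ->
  count (pred1 j) (take a u) = count (fun i => nth d u i.-1 == j) (iota 1 a).
Proof.
move=> Ha; rewrite -(map_nth_iota0 d Ha) count_map.
by rewrite (iotaDl 1 0 a) count_map; apply: eq_count.
Qed.

Lemma sorted_count_iota (s : seq nat) r : sorted ltn s -> all (fun x => 0 < x) s ->
  r < size s -> count (mem s) (iota 1 (nth 0 s r)) = r.+1.
Proof.
move=> Hs Hp Hr.
have Hu : uniq s by apply: sorted_uniq Hs; [exact: ltn_trans | exact: ltnn].
have -> : count (mem s) (iota 1 (nth 0 s r)) = size [seq x <- s | x <= nth 0 s r].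
  rewrite -size_filter; apply: perm_size; apply: uniq_perm.
  - by apply: filter_uniq; apply: iota_uniq.
  - exact: filter_uniq.
  move=> x; rewrite !mem_filter mem_iota /=; apply/andP/andP => [[Hx Hxr] | [Hxr Hx]].
    by split => //; lia.
  by split => //; have := allP Hp _ Hx; lia.
elim: s r Hs Hp Hr {Hu} => [|x s IH] [|r] //= Hs /andP [Hx Hp] Hr.
  rewrite leqnn /=; congr _.+1; apply/eqP; rewrite size_filter -leqn0 leqNgt -has_count.
  apply/negP => /hasP [y Hy Hyx].
  by have := order_path_min ltn_trans Hs => /allP /(_ _ Hy) /=; lia.
have Hxn : x <= nth 0 s r.
  by have := order_path_min ltn_trans Hs => /allP /(_ (nth 0 s r) (mem_nth _ Hr)) /=; lia.
by rewrite Hxn /= IH //; exact: path_sorted Hs.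
Qed.

Lemma uniq_flatten_blocks (A : eqType) (B : nat -> seq A) (l : seq nat) :
  uniq l -> (forall j, uniq (B j)) ->
  (forall j j' x, j \in l -> j' \in l -> x \in B j -> x \in B j' -> j = j') ->
  uniq (flatten (map B l)).
Proof.
elim: l => //= a l IH /andP [Ha Hl] HB Hd; rewrite cat_uniq HB IH //; last first.
  by move=> j j' x Hj Hj'; apply: Hd; rewrite inE ?Hj ?Hj' orbT.
rewrite andbT; apply/hasPn => x /flatten_mapP [j Hj Hx]; apply/negP => Hx'.
have E := Hd a j x (mem_head _ _) (@mem_behead _ (a :: l) _ Hj) Hx' Hx.
by rewrite E Hj in Ha.
Qed.

Lemma flatten_blocks_disjoint (A : eqType) (B : nat -> seq A) (l : seq nat) j j' x :
  uniq (flatten (map B l)) -> j \in l -> j' \in l -> x \in B j -> x \in B j' -> j = j'.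
Proof.
elim: l => //= a l IH; rewrite cat_uniq => /andP [_ /andP [Hd Hu]].
rewrite !inE => /orP [/eqP -> | Hj] /orP [/eqP -> | Hj'] // Hx Hx'.
- by move/hasP: Hd; case; exists x => //; apply/flatten_mapP; exists j'.
- by move/hasP: Hd; case; exists x => //; apply/flatten_mapP; exists j.
- exact: IH.
Qed.

(** * The skew shape la^(1) u ... u la^(b) *)

Section SkewShape.
Variable las : seq (seq nat).
Hypothesis las_ok : all (fun la => is_partition la && (la != [::])) las.
Local Notation b := (size las).
Local Notation la j := (nth [::] las j).
Local Notation Y j := (ydiag (nth [::] las j)).
Local Notation q j := (sumn (nth [::] las j)).
Local Notation sh := (skew_union las).
Local Notation n := (sumn [seq sumn l | l <- las]).

Definition shift j (c : cell) : cell := (c.1 + row_off las j, c.2 + col_off las j).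

Lemma shift_inj j : injective (shift j).
Proof. by move=> [x y] [x' y'] [/addIn -> /addIn ->]. Qed.

Lemma shift_right j c : shift j (c.1, c.2.+1) = ((shift j c).1, (shift j c).2.+1).
Proof. by rewrite /shift /= addSn. Qed.

Lemma shift_down j c : shift j (c.1.+1, c.2) = ((shift j c).1.+1, (shift j c).2).
Proof. by rewrite /shift /= addSn. Qed.

Lemma piece_shift j : piece las j = map (shift j) (Y j).
Proof. by []. Qed.

Lemma piece_partition j : j < b -> is_partition (la j) /\ la j != [::].
Proof. by move=> Hj; have /andP[] := all_nthP [::] las_ok j Hj. Qed.

Lemma row_off_later j j' : j < j' -> j' < b -> row_off las j' + size (la j') <= row_off las j.
Proof.
move=> Hjj' Hj'; rewrite /row_off.
have -> : b - j.+1 = (j' - j.+1) + (b - j') by lia.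
rewrite iotaD map_cat sumn_cat.
have -> : j.+1 + (j' - j.+1) = j' by lia.
have -> : b - j' = (b - j'.+1).+1 by lia.
rewrite /=; lia.
Qed.

Lemma col_off_later j j' : j < j' -> col_off las j + head 0 (la j) <= col_off las j'.
Proof.
move=> Hjj'; rewrite /col_off.
have -> : j' = j + (j' - j) by lia.
rewrite iotaD map_cat sumn_cat leq_add2l.
have -> : j' - j = (j' - j.+1).+1 by lia.
by rewrite /= leq_addr.
Qed.

Lemma shift_row_range j c : c \in Y j ->
  row_off las j <= (shift j c).1 < row_off las j + size (la j).
Proof. by rewrite mem_ydiag /= => /andP[H _]; rewrite leq_addl addnC ltn_add2l. Qed.

Lemma shift_col_range j c : j < b -> c \in Y j ->
  col_off las j <= (shift j c).2 < col_off las j + head 0 (la j).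
Proof.
move=> Hj; rewrite mem_ydiag /= => /andP[H1 H2]; rewrite leq_addl addnC ltn_add2l.
exact: leq_trans H2 (part_nth_head (piece_partition Hj).1 H1).
Qed.

Lemma shift_same_row j j' c c' : j < b -> j' < b -> c \in Y j -> c' \in Y j' ->
  (shift j c).1 = (shift j' c').1 -> j = j'.
Proof.
move=> Hj Hj' Hc Hc' E.
have := shift_row_range Hc; have := shift_row_range Hc'; rewrite E.
case: (ltngtP j j') => // H; [have := row_off_later H Hj' | have := row_off_later H Hj]; lia.
Qed.

Lemma shift_same_col j j' c c' : j < b -> j' < b -> c \in Y j -> c' \in Y j' ->
  (shift j c).2 = (shift j' c').2 -> j = j'.
Proof.
move=> Hj Hj' Hc Hc' E.
have := shift_col_range Hj Hc; have := shift_col_range Hj' Hc'; rewrite E.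
by case: (ltngtP j j') => // H; have := col_off_later H; lia.
Qed.

Lemma shift_eq j j' c c' : j < b -> j' < b -> c \in Y j -> c' \in Y j' ->
  shift j c = shift j' c' -> j = j' /\ c = c'.
Proof.
move=> Hj Hj' Hc Hc' E; have Ej := shift_same_row Hj Hj' Hc Hc' (f_equal fst E).
by subst j'; split => //; apply: shift_inj E.
Qed.

Lemma skew_unionP x :
  reflect (exists j, exists2 c, j < b /\ c \in Y j & x = shift j c) (x \in sh).
Proof.
apply: (iffP flatten_mapP) => [[j] | [j [c [Hj Hc] ->]]].
  by rewrite mem_iota /= => Hj /mapP [c Hc ->]; exists j, c.
by exists j; [rewrite mem_iota | rewrite piece_shift mem_map //; apply: shift_inj].
Qed.

Lemma shift_in_skew j c : j < b -> c \in Y j -> shift j c \in sh.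
Proof. by move=> Hj Hc; apply/skew_unionP; exists j, c. Qed.

Lemma skew_right j c : j < b -> c \in Y j ->
  (shift j (c.1, c.2.+1) \in sh) = ((c.1, c.2.+1) \in Y j).
Proof.
move=> Hj Hc; apply/idP/idP; last exact: shift_in_skew.
case/skew_unionP => j0 [c0 [Hj0 Hc0] E].
have Ej : j = j0 by apply: (shift_same_row Hj Hj0 Hc Hc0); rewrite -E.
by subst j0; rewrite (shift_inj E).
Qed.

Lemma skew_down j c : j < b -> c \in Y j ->
  (shift j (c.1.+1, c.2) \in sh) = ((c.1.+1, c.2) \in Y j).
Proof.
move=> Hj Hc; apply/idP/idP; last exact: shift_in_skew.
case/skew_unionP => j0 [c0 [Hj0 Hc0] E].
have Ej : j = j0 by apply: (shift_same_col Hj Hj0 Hc Hc0); rewrite -E.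
by subst j0; rewrite (shift_inj E).
Qed.

Lemma union_tab_shift Us j c : j < b -> c \in Y j -> union_tab las Us (shift j c) = Us j c.
Proof.
move=> Hj Hc; rewrite /union_tab.
have : j \in iota 0 b by rewrite mem_iota.
have : forall i, i \in iota 0 b -> shift j c \in piece las i -> i = j.
  move=> i; rewrite mem_iota /= => Hi; rewrite piece_shift => /mapP [c' Hc' E].
  by have [] := shift_eq Hi Hj Hc' Hc (esym E).
elim: (iota 0 b) => //= i s IH Hu.
case: ifP => [Hin _ | Hin].
  have Ei := Hu i (mem_head _ _) Hin; subst i.
  by rewrite /shift /= !addnK [in RHS](surjective_pairing c).
rewrite inE => /orP [/eqP Ei | Hs].
  by subst i; rewrite piece_shift mem_map ?Hc in Hin; last exact: shift_inj.
by apply: IH Hs => i' Hi'; apply: Hu; rewrite inE Hi' orbT.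
Qed.

Lemma union_tab_out Us x : x \notin sh -> union_tab las Us x = 0.
Proof.
move=> Hx; rewrite /union_tab.
have : forall i, i \in iota 0 b -> x \notin piece las i.
  by move=> i Hi; apply: contra Hx => H; apply/flatten_mapP; exists i.
elim: (iota 0 b) => //= i s IH Hu.
rewrite (negbTE (Hu i (mem_head _ _))); apply: IH => i' Hi'; apply: Hu; by rewrite inE Hi' orbT.
Qed.

Lemma size_skew_union : size sh = n.
Proof.
rewrite /skew_union size_flatten /shape -map_comp.
rewrite (eq_map (g := fun j => q j)); last by move=> i /=; rewrite size_map size_ydiag.
by rewrite (map_comp sumn) -/(mkseq _ _) mkseq_nth.
Qed.

Lemma uniq_skew_union : uniq sh.
Proof.
apply: uniq_flatten_blocks (iota_uniq _ _) _ _ => [j | j j' x].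
  by rewrite piece_shift map_inj_uniq ?uniq_ydiag //; apply: shift_inj.
rewrite !mem_iota /= !piece_shift => Hj Hj' /mapP [c Hc ->] /mapP [c' Hc' E].
by have [] := shift_eq Hj Hj' Hc Hc' E.
Qed.

(* T is encoded by the word w in [0, b)^n and the fillings S j of the pieces
   when the entry v of T lies in piece w_v, and S j c is the rank of the entry
   of T at shift j c among the entries of piece j. *)
Record encodes (T : tableau) (S : nat -> tableau) (w : seq nat) : Prop := Encodes {
  enc_size : size w = n;
  enc_letters : all (fun x => x < b) w;
  enc_count : forall j, j < b -> count (pred1 j) w = q j;
  enc_pieces : forall j, j < b -> std_filling (Y j) (S j);
  enc_rank : forall j c, j < b -> c \in Y j -> occ_rank b w j (T (shift j c)) (S j c);
  enc_out : forall x, x \notin sh -> T x = 0 }.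

Lemma piece_neq_size j : j < b -> j != b.
Proof. by move=> Hj; rewrite ltn_eqF. Qed.

Lemma encodes_inj T S w : encodes T S w -> {in sh &, injective T}.
Proof.
case=> _ _ _ HS HR _ x y /skew_unionP [j [c [Hj Hc] ->]] /skew_unionP [j' [c' [Hj' Hc'] ->]] E.
have R := HR _ _ Hj Hc; have R' := HR _ _ Hj' Hc'.
have Ej : j = j' by case: R R' => _ <- _ [_ <- _]; rewrite E.
subst j'; rewrite -E in R'.
have := occ_rank_inj (piece_neq_size Hj) R R'; rewrite eqxx => /esym /eqP Et.
by rewrite (std_filling_inj (HS _ Hj) Hc Hc' Et).
Qed.

Lemma encodes_std_filling T S w : encodes T S w -> std_filling sh T.
Proof.
move=> HI; split; last exact: enc_out HI.
apply: perm_iota_uniq; last by rewrite size_map.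
- by rewrite map_inj_in_uniq ?uniq_skew_union //; apply: encodes_inj HI.
- move=> v /mapP [x /skew_unionP [j [c [Hj Hc] ->]] ->].
  have R := enc_rank HI Hj Hc; have := occ_rank_size (piece_neq_size Hj) R.
  by case: R => Hv _ _; rewrite mem_iota add1n ltnS size_skew_union -(enc_size HI) Hv.
Qed.

Lemma encodes_tab_unique T T' S w : encodes T S w -> encodes T' S w -> T = T'.
Proof.
move=> HI HI'; apply: functional_extensionality => x.
case: (boolP (x \in sh)) => Hx; last by rewrite (enc_out HI Hx) (enc_out HI' Hx).
case/skew_unionP: Hx => j [c [Hj Hc] ->].
have := occ_rank_inj (piece_neq_size Hj) (enc_rank HI Hj Hc) (enc_rank HI' Hj Hc).
by rewrite eqxx => /eqP.
Qed.

Lemma encodes_unique T S w S' w' : encodes T S w -> encodes T S' w' ->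
  w = w' /\ (forall j, j < b -> S j = S' j).
Proof.
move=> HI HI'.
have Ew : w = w'.
  apply: (@eq_from_nth _ b); first by rewrite (enc_size HI) (enc_size HI').
  move=> i Hi; set j := nth b w i.
  have Hj : j < b by apply: (all_nthP b (enc_letters HI)).
  have R0 : occ_rank b w j i.+1 (count (pred1 j) (take i.+1 w)) by [].
  have Ht : count (pred1 j) (take i.+1 w) \in map (S j) (Y j).
    rewrite (perm_mem (enc_pieces HI Hj).1) mem_iota add1n ltnS size_ydiag.
    by rewrite -(enc_count HI Hj); apply: occ_rank_bounds (piece_neq_size Hj) R0.
  case/mapP: Ht => c Hc Et; rewrite Et in R0.
  have := occ_rank_inj (piece_neq_size Hj) (enc_rank HI Hj Hc) R0.
  rewrite eqxx => /eqP Ev; have [_ E2 _] := enc_rank HI' Hj Hc.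
  by rewrite Ev in E2.
split => // j Hj; subst w'; apply: functional_extensionality => c.
case: (boolP (c \in Y j)) => Hc; last by rewrite ((enc_pieces HI Hj).2 _ Hc) ((enc_pieces HI' Hj).2 _ Hc).
by case: (enc_rank HI Hj Hc) => _ _ <-; case: (enc_rank HI' Hj Hc) => _ _ <-.
Qed.

(* T is a standard tableau iff all the piece fillings are: rows and columns of
   sh lie within single pieces, where the order of entries is the order of
   ranks. *)
Lemma encodes_SYT T S w : encodes T S w -> SYT sh T <-> forall j, j < b -> SYT (Y j) (S j).
Proof.
move=> HI.
have rk_lt j c c' : j < b -> c \in Y j -> c' \in Y j ->
    (T (shift j c) < T (shift j c')) = (S j c < S j c').
  move=> Hj Hc Hc'.
  exact: occ_rank_lt (piece_neq_size Hj) (enc_rank HI Hj Hc) (enc_rank HI Hj Hc').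
split.
  case=> _ _ Hrow Hcol j Hj; have [HS HS0] := enc_pieces HI Hj; split => //.
  - move=> c c' Hc Hc' E Hlt; rewrite -(rk_lt _ _ _ Hj Hc Hc').
    by apply: Hrow; rewrite ?shift_in_skew //= ?E ?ltn_add2r.
  - move=> c c' Hc Hc' E Hlt; rewrite -(rk_lt _ _ _ Hj Hc Hc').
    by apply: Hcol; rewrite ?shift_in_skew //= ?E ?ltn_add2r.
have [Hperm Hout] := encodes_std_filling HI.
move=> HS; split => //.
- move=> x x' /skew_unionP [j [c [Hj Hc] ->]] /skew_unionP [j' [c' [Hj' Hc'] ->]] E Hlt.
  have Ej := shift_same_row Hj Hj' Hc Hc' E; subst j'.
  rewrite (rk_lt _ _ _ Hj Hc Hc'); case: (HS _ Hj) => _ _ Hrow _; apply: Hrow => //.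
    by move: E => /= /addIn.
  by move: Hlt; rewrite /= ltn_add2r.
- move=> x x' /skew_unionP [j [c [Hj Hc] ->]] /skew_unionP [j' [c' [Hj' Hc'] ->]] E Hlt.
  have Ej := shift_same_col Hj Hj' Hc Hc' E; subst j'.
  rewrite (rk_lt _ _ _ Hj Hc Hc'); case: (HS _ Hj) => _ _ _ Hcol; apply: Hcol => //.
    by move: E => /= /addIn.
  by move: Hlt; rewrite /= ltn_add2r.
Qed.

Definition piece_of (T : tableau) (v : nat) : nat :=
  find (fun j => v \in map T (piece las j)) (iota 0 b).

Definition piece_word (T : tableau) : seq nat := map (piece_of T) (iota 1 n).

Definition piece_ranks (T : tableau) (j : nat) : tableau :=
  fun c => if c \in Y j then count (pred1 j) (take (T (shift j c)) (piece_word T)) else 0.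

Section PieceWord.
Variable T : tableau.
Hypothesis T_std : std_filling sh T.

Let T_inj : {in sh &, injective T} := std_filling_inj T_std.

Lemma entry_shift v : v \in iota 1 n -> exists j c, [/\ j < b, c \in Y j & v = T (shift j c)].
Proof.
rewrite -size_skew_union -(perm_mem T_std.1) => /mapP [x /skew_unionP [j [c [Hj Hc] ->]] ->].
by exists j, c.
Qed.

Lemma entry_in_piece j j' c : j < b -> j' < b -> c \in Y j' ->
  (T (shift j' c) \in map T (piece las j)) = (j == j').
Proof.
move=> Hj Hj' Hc; apply/idP/eqP => [/mapP [y Hy E] | ->]; last first.
  by rewrite map_f // piece_shift map_f.
move: Hy; rewrite piece_shift => /mapP [c' Hc' Ey]; subst y.
have := T_inj (shift_in_skew Hj Hc') (shift_in_skew Hj' Hc) (esym E).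
by case/(shift_eq Hj Hj' Hc' Hc).
Qed.

Lemma piece_of_shift j c : j < b -> c \in Y j -> piece_of T (T (shift j c)) = j.
Proof.
move=> Hj Hc; apply: find_iota_unique => [||i Hi] //=; first by rewrite entry_in_piece ?eqxx.
by rewrite entry_in_piece // => /eqP.
Qed.

Lemma entry_range j c : j < b -> c \in Y j -> 0 < T (shift j c) <= n.
Proof.
move=> Hj Hc; have := std_filling_range T_std (shift_in_skew Hj Hc).
by rewrite size_skew_union.
Qed.

Lemma piece_word_rank j c : j < b -> c \in Y j ->
  occ_rank b (piece_word T) j (T (shift j c)) (piece_ranks T j c).
Proof.
move=> Hj Hc; have /andP [Hpos Hle] := entry_range Hj Hc.
split => //; last by rewrite /piece_ranks Hc.
rewrite (nth_map 0) ?size_iota; last lia.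
by rewrite nth_iota ?add1n ?prednK ?piece_of_shift //; lia.
Qed.

Lemma count_piece_word j : j < b -> count (pred1 j) (piece_word T) = q j.
Proof.
move=> Hj; rewrite count_map.
rewrite (eq_in_count (a2 := mem (map T (piece las j)))); last first.
  by move=> v /entry_shift [j' [c' [Hj' Hc' ->]]]; rewrite /= piece_of_shift // entry_in_piece // eq_sym.
rewrite count_mem_sub ?iota_uniq ?size_map ?piece_shift ?size_map ?size_ydiag //.
- rewrite map_inj_in_uniq ?map_inj_uniq ?uniq_ydiag //; first exact: shift_inj.
  by move=> x y /mapP [c Hc ->] /mapP [c' Hc' ->]; apply: T_inj; apply: shift_in_skew.
- move=> v /mapP [x /mapP [c Hc ->] ->].
  by rewrite mem_iota add1n ltnS; apply: entry_range.
Qed.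

Lemma encodes_exists : encodes T (piece_ranks T) (piece_word T).
Proof.
have Hrk := piece_word_rank; have Hcnt := count_piece_word.
split => //; first by rewrite size_map size_iota.
- by apply/allP => x /mapP [v /entry_shift [j [c [Hj Hc ->]]] ->]; rewrite piece_of_shift.
- move=> j Hj; split; last by move=> c /negbTE; rewrite /piece_ranks => ->.
  apply: perm_iota_uniq; last by rewrite size_map.
  + rewrite map_inj_in_uniq ?uniq_ydiag // => c c' Hc Hc' E.
    have := occ_rank_inj (piece_neq_size Hj) (Hrk _ _ Hj Hc) (Hrk _ _ Hj Hc').
    rewrite E eqxx => /eqP /(T_inj (shift_in_skew Hj Hc) (shift_in_skew Hj Hc')).
    exact: shift_inj.
  + move=> t /mapP [c Hc ->]; rewrite mem_iota add1n ltnS size_ydiag -(Hcnt _ Hj).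
    exact: occ_rank_bounds (piece_neq_size Hj) (Hrk _ _ Hj Hc).
- exact: T_std.2.
Qed.

End PieceWord.

Lemma encodes_first_piece T S w : encodes T S w -> 0 < n ->
  let j0 := nth b w 0 in
  [/\ j0 < b, 0 < size (Y j0) & cell_of_one sh T = shift j0 (cell_of_one (Y j0) (S j0))].
Proof.
move=> HI Hn j0; have Hw : 0 < size w by rewrite (enc_size HI).
have Hj0 : j0 < b by apply: (all_nthP b (enc_letters HI)).
have Hq0 : 0 < size (Y j0).
  rewrite size_ydiag -(enc_count HI Hj0) -has_count; apply/hasP.
  by exists j0; rewrite ?mem_nth //= eqxx.
have [Hc1 Hc1v _] := cell_of_one_spec (enc_pieces HI Hj0) Hq0.
set c1 := cell_of_one (Y j0) (S j0) in Hc1 Hc1v *; split => //.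
have R1 := enc_rank HI Hj0 Hc1; rewrite Hc1v in R1.
have R0 : occ_rank b w j0 1 1.
  by rewrite /j0 /occ_rank; case: (w) Hw => [|x w'] // _; split; rewrite /= ?take0 ?eqxx.
have HT1 : T (shift j0 c1) = 1.
  by move: (occ_rank_inj (piece_neq_size Hj0) R1 R0); rewrite eqxx => /eqP.
have Hhas : has (fun c => T c == 1) sh.
  by apply/hasP; exists (shift j0 c1); [exact: shift_in_skew | rewrite HT1].
apply: (encodes_inj HI); first by rewrite mem_nth // -has_find.
  exact: shift_in_skew.
by rewrite (eqP (nth_find _ Hhas)) HT1.
Qed.

Lemma jdt_piece_fuel j S e fuel : j < b -> e \in Y j -> q j <= fuel ->
  jdt (Y j) S e fuel = jdt (Y j) S e (q j).
Proof.
move=> Hj He Hfuel; have [Hp Hne] := piece_partition Hj.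
apply: (@jdt_enough_fuel (Y j) (q j)) => //; last by rewrite leq_addl.
- by move=> c; apply: ydiag_diag_bound.
- by apply: (leq_trans Hfuel); rewrite leq_addl.
Qed.

Definition promote_piece (S : nat -> tableau) (j0 : nat) : nat -> tableau :=
  fun j => if j == j0 then promotion (Y j) (S j) else S j.

Lemma encodes_promotion T S w : encodes T S w -> 0 < n ->
  encodes (promotion sh T) (promote_piece S (nth b w 0)) (rot 1 w).
Proof.
move=> HI Hn; case: (HI) => Hs Hall Hcnt HS HR Hout.
have [Hj0 Hq0 Hfirst] := encodes_first_piece HI Hn.
set j0 := nth b w 0 in Hj0 Hq0 Hfirst *.
have Hj0b := piece_neq_size Hj0.
have [Hc1 _ Hhole] := cell_of_one_spec (HS _ Hj0) Hq0.
set c1 := cell_of_one (Y j0) (S j0) in Hc1 Hhole Hfirst; rewrite size_ydiag in Hhole.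
have Hqn : q j0 <= n by rewrite -Hcnt // -Hs count_size.
(* The slide in sh from the cell of 1 is the translate of the slide in piece
   j0 from c1; its extra fuel n >= |la^(j0)| makes no difference. *)
have [E1 E2 E3] := jdt_transport (@shift_inj j0) (shift_right j0) (shift_down j0)
   (fun c Hc => skew_right Hj0 Hc) (fun c Hc => skew_down Hj0 Hc)
   (fun v t v' t' => occ_rank_lt Hj0b) n Hc1 (fun c => HR _ c Hj0).
have [He [_ Hrange]] := jdt_hole_filling (q j0) Hc1 Hhole.
have Epiece : promotion (Y j0) (S j0) = (let (S', e) := jdt (Y j0) (S j0) c1 (q j0) in
   fun c => if c \in Y j0 then (if c == e then q j0 else S' c - 1) else 0).
  by rewrite /promotion -/(cell_of_one (Y j0) (S j0)) -/c1 size_ydiag.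
rewrite (jdt_piece_fuel _ Hj0 Hc1 Hqn) in E1 E2 E3.
rewrite /promote_piece {1}/promotion -/(cell_of_one sh T) Hfirst size_skew_union.
move: E1 E2 E3 He Hrange Epiece.
case: (jdt (Y j0) (S j0) c1 (q j0)) => S' e; case: (jdt sh T (shift j0 c1) n) => T' e'.
move=> /= -> E2 E3 He Hrange Epiece.
(* In piece j0 ranks drop by one, except at the final hole, which receives n,
   the last occurrence of j0 in rot 1 w; other pieces keep their ranks. *)
have Prot : perm_eq (rot 1 w) w by rewrite perm_rot.
split.
- by rewrite size_rot.
- by rewrite (perm_all _ Prot).
- by move=> j Hj; rewrite (permP Prot); apply: Hcnt.
- move=> j Hj; case: eqP => [-> | _]; last exact: HS.
  by apply: promotion_std_filling; rewrite ?uniq_ydiag //; apply: HS.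
- move=> j c Hj Hc; rewrite (shift_in_skew Hj Hc).
  case: (eqVneq j j0) => [Ej | Hjj0].
    subst j; rewrite Epiece Hc (inj_eq (@shift_inj j0)).
    case: (eqVneq c e) => [_ | Hce]; first by rewrite -Hs -(Hcnt _ Hj0); apply: occ_rank_rot_last.
    rewrite !subn1; apply: occ_rank_rot_head => //; first exact: E2.
    by case/andP: (Hrange _ Hc Hce).
  have Hother c' : c' \in Y j0 -> shift j c != shift j0 c'.
    move=> Hc'; apply/eqP => E; have [Ejj0 _] := shift_eq Hj Hj0 Hc Hc' E.
    by rewrite Ejj0 eqxx in Hjj0.
  rewrite (negbTE (Hother _ He)) E3 // subn1.
  exact: occ_rank_rot_other (piece_neq_size Hj) Hjj0 (HR _ _ Hj Hc).
- by move=> x /negbTE ->.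
Qed.

Definition promote_pieces (S : nat -> tableau) (w : seq nat) (m : nat) : nat -> tableau :=
  fun j => iter (count (pred1 j) (take m w)) (promotion (Y j)) (S j).

Lemma encodes_iter_promotion T S w m : encodes T S w -> 0 < n -> m <= n ->
  encodes (iter m (promotion sh) T) (promote_pieces S w m) (rot m w).
Proof.
move=> HI Hn; elim: m => [|m IH] Hm.
  have -> : promote_pieces S w 0 = S.
    by apply: functional_extensionality => j; rewrite /promote_pieces take0.
  by rewrite rot0.
have Hs := enc_size HI.
have Erot : rot 1 (rot m w) = rot m.+1 w by rewrite -rotD // Hs.
have Efirst : nth b (rot m w) 0 = nth b w m.
  by rewrite /rot nth_cat size_drop subn_gt0 Hs Hm nth_drop addn0.
have Epieces : promote_piece (promote_pieces S w m) (nth b w m) = promote_pieces S w m.+1.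
  apply: functional_extensionality => j; rewrite /promote_piece /promote_pieces.
  rewrite (take_nth b) ?Hs // -cats1 count_cat /= addn0 eq_sym.
  by case: eqP => _; rewrite ?addn1 ?addn0.
by rewrite -Erot -Epieces -Efirst; apply: encodes_promotion (IH (ltnW Hm)) Hn.
Qed.

Definition block_positions (k m : nat) (u : seq nat) (Ms : nat -> seq nat) : Prop :=
  forall j, j < b -> [/\ sorted ltn (Ms j), {subset Ms j <= iota 1 m},
    (forall i, i \in iota 1 m -> (i \in Ms j) = (nth b u i.-1 == j)) & k * size (Ms j) = q j].

Section BlockPositions.
Variables (k m : nat) (u : seq nat) (Ms : nat -> seq nat).
Hypotheses (u_size : size u = m) (u_blocks : block_positions k m u Ms).

Lemma count_take_blocks j a : j < b -> a <= m ->
  count (pred1 j) (take a u) = count (mem (Ms j)) (iota 1 a).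
Proof.
move=> Hj Ha; have [_ _ Hpos _] := u_blocks Hj.
rewrite (count_take_positions b) ?u_size //; apply: eq_in_count => i.
by rewrite mem_iota => /andP [H1 H2] /=; rewrite Hpos // mem_iota H1; lia.
Qed.

Lemma count_blocks j : j < b -> count (pred1 j) u = size (Ms j).
Proof.
move=> Hj; have [Hsorted Hsub _ _] := u_blocks Hj.
rewrite -{1}(take_size u) u_size (count_take_blocks Hj (leqnn m)).
apply: count_mem_sub => //; last exact: iota_uniq.
by apply: sorted_uniq Hsorted; [exact: ltn_trans | exact: ltnn].
Qed.

(* The t-th occurrence of j in u^k lies in the copy p = (t-1) / |Ms j| of u,
   at the position of rank r = (t-1) mod |Ms j| in Ms j: this is I_{m, Ms j}. *)
Lemma occ_rank_power j t : j < b -> 0 < t <= q j ->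
  occ_rank b (flatten (nseq k u)) j
    ((t.-1 %/ size (Ms j)) * m + nth 0 (Ms j) (t.-1 %% size (Ms j))) t.
Proof.
move=> Hj /andP [Ht1 Ht2]; have [Hsorted Hsub Hpos Hq] := u_blocks Hj.
set cj := size (Ms j) in Hq *; rewrite -Hq in Ht2.
have Hcj : 0 < cj by case: (posnP cj) Ht2 => // ->; rewrite muln0; lia.
set p := t.-1 %/ cj; set r := t.-1 %% cj.
have Hr : r < cj by apply: ltn_pmod.
have Hp : p < k by rewrite /p ltn_divLR //; lia.
have Ha : nth 0 (Ms j) r \in Ms j by apply: mem_nth.
have := Hsub _ Ha; rewrite mem_iota => /andP [Ha1 Ha2].
have Hae := Hpos _ (Hsub _ Ha); rewrite Ha in Hae.
set a := nth 0 (Ms j) r in Ha Ha1 Ha2 Hae *.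
have Hall_pos : all (fun x => 0 < x) (Ms j).
  by apply/allP => x /Hsub; rewrite mem_iota => /andP [].
split; first lia.
  have -> : (p * m + a).-1 = p * size u + a.-1 by rewrite u_size; lia.
  by rewrite nth_flatten_nseq ?u_size //; [exact/eqP | lia].
have Ham : a <= m by lia.
rewrite -u_size count_take_flatten_nseq ?u_size //.
rewrite count_blocks // count_take_blocks //.
rewrite sorted_count_iota // -/cj.
by have := divn_eq t.-1 cj; rewrite -/p -/r; lia.
Qed.

Lemma encodes_union_I_map S : n = k * m -> all (fun x => x < b) u ->
  (forall j, j < b -> std_filling (Y j) (S j)) ->
  encodes (union_tab las (fun j => I_map m (Ms j) (S j))) S (flatten (nseq k u)).
Proof.
move=> Hn Hall HS; split.
- by rewrite size_flatten_nseq u_size Hn.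
- exact: all_flatten_nseq.
- move=> j Hj; rewrite count_flatten_nseq count_blocks //.
  by case: (u_blocks Hj).
- exact: HS.
- move=> j c Hj Hc; rewrite union_tab_shift // /I_map.
  have /andP [Ht1 Ht2] := std_filling_range (HS j Hj) Hc; rewrite size_ydiag in Ht2.
  by rewrite gtn_eqF //; apply: occ_rank_power; rewrite ?Ht1.
- by move=> x Hx; rewrite union_tab_out.
Qed.

End BlockPositions.

Definition word_positions (m : nat) (u : seq nat) (j : nat) : seq nat :=
  [seq i <- iota 1 m | nth b u i.-1 == j].

Definition block_of (Ms : nat -> seq nat) (x : nat) : nat :=
  find (fun j => x \in Ms j) (iota 0 b).

Definition partition_word (m : nat) (Ms : nat -> seq nat) : seq nat :=
  map (block_of Ms) (iota 1 m).

Lemma word_positions_blocks k m u : size u = m ->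
  (forall j, j < b -> q j = k * count (pred1 j) u) -> block_positions k m u (word_positions m u).
Proof.
move=> Hsu Hq j Hj; split.
- by apply: sorted_filter; [exact: ltn_trans | exact: iota_ltn_sorted].
- by move=> x; rewrite mem_filter => /andP [].
- by move=> i Hi; rewrite mem_filter Hi andbT.
- by rewrite size_filter -(count_take_positions b) ?Hsu // take_oversize ?Hsu // Hq.
Qed.

Lemma word_positions_partition m u : size u = m -> all (fun x => x < b) u ->
  perm_eq (flatten [seq word_positions m u j | j <- iota 0 b]) (iota 1 m).
Proof.
move=> Hsu Hall; apply: uniq_perm; last first.
- move=> x; apply/flatten_mapP/idP => [[j _] | Hx]; first by rewrite mem_filter => /andP [].
  have /andP [H1 H2] : 0 < x < 1 + m by rewrite -mem_iota.
  exists (nth b u x.-1); last by rewrite mem_filter Hx eqxx.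
  by rewrite mem_iota /=; apply: (allP Hall); apply: mem_nth; rewrite Hsu; lia.
- exact: iota_uniq.
- apply: uniq_flatten_blocks (iota_uniq _ _) _ _ => [j | j j' x _ _].
    exact/filter_uniq/iota_uniq.
  by rewrite !mem_filter => /andP [/eqP <- _] /andP [/eqP <- _].
Qed.

Section PartitionWord.
Variables (m : nat) (Ms : nat -> seq nat).
Hypothesis Ms_part : perm_eq (flatten [seq Ms j | j <- iota 0 b]) (iota 1 m).

Lemma block_of_mem j x : j < b -> x \in Ms j -> block_of Ms x = j.
Proof.
have Hu : uniq (flatten [seq Ms j | j <- iota 0 b]) by rewrite (perm_uniq Ms_part) iota_uniq.
move=> Hj Hx; apply: find_iota_unique => // i Hi Hxi.
by apply: (flatten_blocks_disjoint Hu _ _ Hxi Hx); rewrite mem_iota.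
Qed.

Lemma block_of_cover x : x \in iota 1 m -> exists2 j, j < b & x \in Ms j.
Proof.
rewrite -(perm_mem Ms_part) => /flatten_mapP [j Hj Hx]; exists j => //.
by move: Hj; rewrite mem_iota.
Qed.

Lemma size_partition_word : size (partition_word m Ms) = m.
Proof. by rewrite size_map size_iota. Qed.

Lemma partition_word_letters : all (fun x => x < b) (partition_word m Ms).
Proof.
by apply/allP => x /mapP [i /block_of_cover [j Hj Hx] ->]; rewrite (block_of_mem Hj Hx).
Qed.

Lemma partition_word_blocks k : (forall j, j < b -> sorted ltn (Ms j) /\ k * size (Ms j) = q j) ->
  block_positions k m (partition_word m Ms) Ms.
Proof.
move=> HMs j Hj; have [Hsorted Hsize] := HMs j Hj; split => //.
- by move=> x Hx; rewrite -(perm_mem Ms_part); apply/flatten_mapP; exists j; rewrite ?mem_iota.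
- move=> i Hi; rewrite (nth_map 0) ?size_iota; last by move: Hi; rewrite mem_iota; lia.
  rewrite nth_iota; last by move: Hi; rewrite mem_iota; lia.
  rewrite add1n prednK; last by move: Hi; rewrite mem_iota => /andP [].
  apply/idP/eqP => [Hx | <-]; first exact: block_of_mem.
  by have [j' Hj' Hx] := block_of_cover Hi; rewrite (block_of_mem Hj' Hx).
Qed.

End PartitionWord.

Section FixedPoints.
Variables (k m : nat).
Hypotheses (n_pos : 0 < n) (n_eq : n = k * m).

Lemma period_count_pos : 0 < k.
Proof. by move: n_pos; rewrite n_eq muln_gt0 => /andP []. Qed.

Lemma fixed_period_le : m <= n.
Proof. by rewrite n_eq leq_pmull // period_count_pos. Qed.

Lemma fixed_encoding T : fixed_SYT sh m T ->
  exists S w, [/\ encodes T S w, forall j, j < b -> SYT (Y j) (S j),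
    w = flatten (nseq k (take m w)) &
    forall j, j < b -> iter (count (pred1 j) (take m w)) (promotion (Y j)) (S j) = S j].
Proof.
move=> [HT Hfix]; have HI := encodes_exists (SYT_std_filling HT).
set S := piece_ranks T in HI; set w := piece_word T in HI.
have HI' := encodes_iter_promotion HI n_pos fixed_period_le; rewrite Hfix in HI'.
have [Ew ES] := encodes_unique HI HI'.
exists S, w; split => //.
- by apply/(encodes_SYT HI).
- by apply: rot_periodic; [rewrite (enc_size HI) n_eq | rewrite -Ew].
- by move=> j Hj; rewrite {2}(ES j Hj).
Qed.

Lemma periodic_piece_size T S w j : encodes T S w -> w = flatten (nseq k (take m w)) ->
  j < b -> q j = k * count (pred1 j) (take m w).
Proof. by move=> HI Ew Hj; rewrite -(enc_count HI Hj) {1}Ew count_flatten_nseq. Qed.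

Lemma fixed_SYT_piece_dvd T : fixed_SYT sh m T -> forall j, j < b -> k %| q j.
Proof.
case/fixed_encoding => S [w [HI _ Ew _]] j Hj.
by rewrite (periodic_piece_size HI Ew Hj) dvdn_mulr.
Qed.

Lemma fixed_SYT_decompose T : fixed_SYT sh m T ->
  exists (Ts : nat -> tableau) (Ms : nat -> seq nat),
    (forall j, j < b -> fixed_SYT (Y j) (q j %/ k) (Ts j)) /\
    ordered_set_partition m b (fun j => q j %/ k) Ms /\
    T = union_tab las (fun j => I_map m (Ms j) (Ts j)).
Proof.
case/fixed_encoding => S [w [HI HS Ew Hfix]]; set u := take m w.
have Hsu : size u = m.
  by rewrite size_take (enc_size HI); have := fixed_period_le; case: ltnP => //; lia.
have Hall : all (fun x => x < b) u.
  by apply/allP => x /mem_take; apply: (allP (enc_letters HI)).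
have HB := word_positions_blocks Hsu (fun j => periodic_piece_size HI Ew).
have Hsz j : j < b -> q j %/ k = size (word_positions m u j).
  by move=> Hj; have [_ _ _ <-] := HB j Hj; rewrite mulKn // period_count_pos.
exists S, (word_positions m u); split; [|split].
- move=> j Hj; split; first exact: HS.
  by rewrite Hsz // -(count_blocks Hsu HB Hj); apply: Hfix.
- split; last exact: word_positions_partition.
  by move=> j Hj; split; [case: (HB j Hj) | rewrite Hsz].
- apply: (encodes_tab_unique HI); rewrite Ew.
  by apply: encodes_union_I_map => //; apply: enc_pieces HI.
Qed.

(* Conversely, such unions are fixed by pr^m: their encoding word u^k is
   invariant under rotation by m, and pr^m promotes the filling of piece j
   exactly |Ms j| times. *)
Lemma fixed_SYT_compose (Ts : nat -> tableau) (Ms : nat -> seq nat) :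
  (forall j, j < b -> k %| q j) ->
  (forall j, j < b -> fixed_SYT (Y j) (q j %/ k) (Ts j)) ->
  ordered_set_partition m b (fun j => q j %/ k) Ms ->
  fixed_SYT sh m (union_tab las (fun j => I_map m (Ms j) (Ts j))).
Proof.
move=> Hdvd HTs [HMs Hpart].
set u := partition_word m Ms.
have Hsu : size u = m := size_partition_word m Ms.
have HB : block_positions k m u Ms.
  apply: partition_word_blocks => // j Hj; have [Hsorted ->] := HMs j Hj.
  by rewrite mulnC divnK ?Hdvd.
have HI := encodes_union_I_map Hsu HB n_eq (partition_word_letters Hpart)
  (fun j Hj => SYT_std_filling (HTs j Hj).1).
split; first by apply/(encodes_SYT HI) => j Hj; exact: (HTs j Hj).1.
have HI' := encodes_iter_promotion HI n_pos fixed_period_le.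
have Erot : rot m (flatten (nseq k u)) = flatten (nseq k u) by rewrite -{1}Hsu rot_flatten_nseq.
have Epieces : promote_pieces Ts (flatten (nseq k u)) m = Ts.
  apply: functional_extensionality => j; rewrite /promote_pieces -{1}Hsu take_flatten_nseq ?period_count_pos //.
  case: (ltnP j b) => Hj; first by rewrite (count_blocks Hsu HB Hj) (HMs j Hj).2 (HTs j Hj).2.
  rewrite (@eq_in_count _ _ pred0) ?count_pred0 //= => x Hx.
  by apply/eqP => Exj; have := allP (partition_word_letters Hpart) _ Hx; rewrite Exj ltnNge Hj.
by rewrite Erot Epieces in HI'; apply: (encodes_tab_unique HI' HI).
Qed.

End FixedPoints.

End SkewShape.

Lemma sum_sizes_pos (las : seq (seq nat)) :
  0 < size las -> all (fun la => is_partition la && (la != [::])) las ->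
  0 < sumn [seq sumn la | la <- las].
Proof.
case: las => [|[|x la] las] //= _ /andP [/andP [/andP [_ /andP [Hx _]] _] _].
lia.
Qed.

Lemma dvdn_gcd_pieces (las : seq (seq nat)) k :
  (k %| \big[gcdn/0]_(la <- las) sumn la) <->
  (forall j, j < size las -> k %| sumn (nth [::] las j)).
Proof.
rewrite dvdn_biggcd_seq; split => [/(all_nthP [::]) Hall j Hj | Hall].
  exact: Hall.
by apply/(all_nthP [::]) => j Hj; apply: Hall.
Qed.

Theorem mainTheorem16 (las : seq (seq nat)) (k : nat) :
  0 < size las ->
  all (fun la => is_partition la && (la != [::])) las ->
  0 < k ->
  k %| sumn [seq sumn la | la <- las] ->
  let n := sumn [seq sumn la | la <- las] in
  let b := size las in
  let sh := skew_union las in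
  (k %| \big[gcdn/0]_(la <- las) sumn la ->
    forall T : tableau,
      fixed_SYT sh (n %/ k) T <->
      exists (Ts : nat -> tableau) (Ms : nat -> seq nat),
        (forall j, j < b ->
           fixed_SYT (ydiag (nth [::] las j)) (sumn (nth [::] las j) %/ k) (Ts j)) /\
        ordered_set_partition (n %/ k) b (fun j => sumn (nth [::] las j) %/ k) Ms /\
        T = union_tab las (fun j => I_map (n %/ k) (Ms j) (Ts j))) /\
  (~~ (k %| \big[gcdn/0]_(la <- las) sumn la) ->
    forall T : tableau, ~ fixed_SYT sh (n %/ k) T).
Proof.
move=> Hb Hlas _ Hkn n b sh.
have Hn0 : 0 < n := sum_sizes_pos Hb Hlas.
have Hn : n = k * (n %/ k) by rewrite mulnC divnK.
split=> [/dvdn_gcd_pieces Hdvd T | /negP Hndvd T Hfix]; first split.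
- exact: (fixed_SYT_decompose Hlas Hn0 Hn).
- by case=> Ts [Ms [HTs [HMs ->]]]; apply: (fixed_SYT_compose Hlas Hn0 Hn).
- by apply/Hndvd/dvdn_gcd_pieces; apply: fixed_SYT_piece_dvd Hfix.
Qed.
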